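(* On the probability space $((0,1),\mathcal{B},\mathcal{L})$ ($\mathcal{B}$ the Borel $\sigma$-algebra, $\mathcal{L}$ Lebesgue measure), the digit sequence $\{d_n\}_{n\ge1}$ of the signed Engel expansion (defined on the irrationals, a set of full measure) is a time-homogeneous Markov chain with initial distribution $$\mathcal{L}(d_1=2k)=\frac{2}{(2k-1)(2k+1)},\qquad k\in\mathbb{N},$$ and one-step transition probabilities, for $k,l\in\mathbb{N}$ with $l\ge k$, $$\mathcal{L}(d_{n+1}=2l\mid d_n=2k)=\begin{cases}\frac{1}{2k},& l=k,\\ \frac{(2k-1)(2k+1)}{k(2l-1)(2l+1)},& l\ge k+1.\end{cases}$$
   Context: Define $T\colon[0,1)\to[0,1)$ by: for $k\in\mathbb{N}$, $Tx=\lceil 1/x\rceil x-1$ if $x\in(\frac{1}{2k},\frac{1}{2k-1})$; $Tx=1-\lfloor 1/x\rfloor x$ if $x\in(\frac{1}{2k+1},\frac{1}{2k})$; $Tx=0$ if $x\in\{0\}\cup\{1/n\colon n\ge 2\}$. For $x\in(0,1)$, $d_1(x)=\lceil 1/x\rceil$ if $x\in[\frac{1}{2k},\frac{1}{2k-1})$ for some $k\in\mathbb{N}$, and $d_1(x)=\lfloor 1/x\rfloor$ if $x\in[\frac{1}{2k+1},\frac{1}{2k})$ for some $k\in\mathbb{N}$; $d_{n+1}(x)=d_1(T^nx)$. For irrational $x$ all $d_n(x)$ are even positive integers. *)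

From HB Require Import structures.
From mathcomp Require Import all_boot all_order all_algebra.
From mathcomp Require Import all_classical all_reals all_analysis.
Set Implicit Arguments. Unset Strict Implicit. Unset Printing Implicit Defensive.
Import Order.TTheory GRing.Theory Num.Theory.
Local Open Scope classical_set_scope.
Local Open Scope ring_scope.

Section SignedEngel.
Variable R : realType.

(* The map T : [0,1) -> [0,1) of the signed Engel expansion.
   For x in (0,1) with 1/x not an integer, let m = floor(1/x) >= 1.
   x in (1/(2k), 1/(2k-1))  <=>  1/x in (2k-1, 2k)  <=> m = 2k-1 is odd,
     and then Tx = ceil(1/x) x - 1;
   x in (1/(2k+1), 1/(2k))  <=>  1/x in (2k, 2k+1)  <=> m = 2k is even,
     and then Tx = 1 - floor(1/x) x;
   Tx = 0 for x = 0 and x = 1/n (n >= 2). *)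
Definition T (x : R) : R :=
  if (x == 0) || (x^-1 \is a Num.int) then 0
  else if odd `|Num.floor x^-1|%N
       then (Num.ceil x^-1)%:~R * x - 1
       else 1 - (Num.floor x^-1)%:~R * x.

(* d_1(x) = ceil(1/x) if x in [1/(2k), 1/(2k-1)) (i.e. 1/x in (2k-1,2k],
   exactly when ceil(1/x) is even), and d_1(x) = floor(1/x) if
   x in [1/(2k+1), 1/(2k)) (i.e. 1/x in (2k, 2k+1], when ceil(1/x) is odd). *)
Definition d1 (x : R) : int :=
  if ~~ odd `|Num.ceil x^-1|%N then Num.ceil x^-1 else Num.floor x^-1.

(* d n x = d_n(x) for n >= 1: d_{n+1}(x) = d_1(T^n x). *)
Definition digit (n : nat) (x : R) : int := d1 (iter n.-1 T x).

Definition irrational (x : R) : Prop := ~ exists q : rat, x = ratr q.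
Definition Omega : set R := [set x | 0 < x < 1 /\ irrational x].

Definition dEvent (n : nat) (m : int) : set R :=
  [set x | Omega x /\ digit n x = m].

Definition cylinder (n : nat) (a : nat -> int) : set R :=
  [set x | Omega x /\ forall i, (1 <= i <= n)%N -> digit i x = a i].

(* Lebesgue probability (real-valued; all events here are in (0,1)). *)
Definition Prob (A : set R) : R := fine (lebesgue_measure A).

Definition condProb (A B : set R) : R := Prob (A `&` B) / Prob B.

End SignedEngel.

Arguments T : clear implicits.
Arguments d1 : clear implicits.
Arguments digit : clear implicits.
Arguments Omega : clear implicits.
Arguments dEvent : clear implicits.
Arguments cylinder : clear implicits.
Arguments Prob : clear implicits.
Arguments condProb : clear implicits.

From Pilot Require Import Defs.
From HB Require Import structures.
From mathcomp Require Import all_boot all_order all_algebra.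
From mathcomp Require Import all_classical all_reals all_analysis.
From mathcomp Require Import ring lra zify.
Import Order.TTheory GRing.Theory Num.Theory.
Local Open Scope classical_set_scope.
Local Open Scope ring_scope.

(* On [Ik k] = (1/(2k+1), 1/(2k-1)) the first digit is 2k and T x = |2kx - 1|,
   two affine branches of slope +-2k.  So if the image under T^n of Lebesgue
   measure restricted to an event E has a density that is constant on every
   [Ik k], then so does its image under T^(n+1), and so does the restriction of
   E to {d_(n+1) = 2k}; the latter density vanishes off [Ik k].  Starting from
   E = (0,1), every cylinder {d_1 = a_1, ..., d_n = 2k} therefore has the same
   conditional law of d_(n+1), determined by k alone. *)

Section lebesgue_facts.
Variable R : realType.
Local Notation mu := (@lebesgue_measure R).

Lemma measurable_fun_affine (s t : R) : measurable_fun setT (fun x : R => s * x + t).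
Proof.
by apply: measurable_realfun.measurable_funD => //;
  exact: measurable_realfun.measurable_funM.
Qed.

Lemma measurable_preimage_affine (s t : R) (A : set R) : measurable A ->
  measurable ((fun x => s * x + t) @^-1` A).
Proof. by move=> mA; rewrite -[_ @^-1` _]setTI; exact: measurable_fun_affine. Qed.

Lemma lebesgue_measure_preimage_affine (s t : R) (A : set R) :
  s != 0 -> measurable A ->
  mu ((fun x => s * x + t) @^-1` A) = ((`|s|^-1)%:E * mu A)%E.
Proof.
move=> s0 mA.
pose f : {mfun measurableTypeR R >-> measurableTypeR R} :=
  HB.pack (fun x : R => s * x + t)
    (isMeasurableFun.Build _ _ (measurableTypeR R) (measurableTypeR R) _
       (measurable_fun_affine s t)).
rewrite [in RHS](@lebesgue_measure_unique R (mscale `|s|%:nng (pushforward mu f))) //=.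
  by rewrite muleA -EFinM mulVf ?normr_eq0 // mul1e.
move=> _ [[a b] _ <-]; rewrite /mscale /=.
have [s_lt0|s_gt0] : s < 0 \/ 0 < s by move: s0; case: ltgtP => //; [left|right].
- rewrite /pushforward (_ : _ @^-1` _ = `[(b - t) / s, (a - t) / s[%classic); last first.
    apply/seteqP; split => x; rewrite /= !in_itv /=;
    by rewrite ltr_ndivlMr // ler_ndivrMr // [x * s]mulrC ltrBlDr lerBrDr andbC.
  rewrite !lebesgue_measure_itv /= !lte_fin ltr_nM2r ?invr_lt0 // ltrD2r.
  case: ifP => _; rewrite ?mule0 // -!EFinD -EFinM ltr0_norm //.
  by congr (_%:E); field; rewrite lt_eqF.
- rewrite /pushforward (_ : _ @^-1` _ = `](a - t) / s, (b - t) / s]%classic); last first.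
    apply/seteqP; split => x; rewrite /= !in_itv /=;
    by rewrite ltr_pdivrMr // ler_pdivlMr // [x * s]mulrC ltrBlDr lerBrDr.
  rewrite !lebesgue_measure_itv /= !lte_fin ltr_pM2r ?invr_gt0 // ltrD2r.
  case: ifP => _; rewrite ?mule0 // -!EFinD -EFinM gtr0_norm //.
  by congr (_%:E); field; rewrite gt_eqF.
Qed.

Lemma measurable_rational : measurable (@rational R).
Proof.
rewrite (_ : rational = \bigcup_(q : rat) [set ratr q]).
  by apply: bigcupT_measurable_rat => q; exact: measurable_set1.
by apply/seteqP; split=> [_ [q _ <-]|_ [q _ ->]]; exists q.
Qed.

Lemma lebesgue_measure_setDrational (A : set R) : measurable A ->
  mu (A `\` (@rational R)) = mu A.
Proof.
move=> mA; have mAQ := measurableI _ _ mA measurable_rational.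
rewrite [RHS](measureDI mu mA measurable_rational).
by rewrite (subset_measure0 (mu := mu) mAQ measurable_rational) ?adde0 //;
  exact: lebesgue_measure_rat.
Qed.

End lebesgue_facts.

Section irrational_facts.
Variable R : realType.

Lemma irrational_affine (a b : rat) (x : R) : a != 0 ->
  Defs.irrational (ratr a * x + ratr b) <-> Defs.irrational x.
Proof.
move=> a0; rewrite /Defs.irrational; split => irr [q qE]; apply: irr.
  by exists (a * q + b); rewrite rmorphD rmorphM /= qE.
exists ((q - b) / a); rewrite fmorph_div rmorphB /= -qE addrK mulrC mulKf //.
by rewrite fmorph_eq0.
Qed.

Lemma irrational_normr (x : R) : Defs.irrational `|x| <-> Defs.irrational x.
Proof.
have irrN (y : R) : Defs.irrational (- y) -> Defs.irrational y.
  rewrite /Defs.irrational => irr [q qE]; apply: irr.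
  by exists (- q); rewrite rmorphN qE.
have [x0|x0] := lerP 0 x; first by rewrite ger0_norm.
by rewrite ltr0_norm //; split => [|irr]; [exact: irrN | apply: irrN; rewrite opprK].
Qed.

End irrational_facts.

Section signed_engel.
Variable R : realType.
Local Notation mu := (@lebesgue_measure R).
Implicit Types (x y : R) (k l n : nat).

Lemma T_d1_between n x : (0 < n)%N -> n%:R * x < 1 < n.+1%:R * x ->
  d1 R x = (if odd n then n.+1 else n)%:Z /\
  T R x = if odd n then n.+1%:R * x - 1 else 1 - n%:R * x.
Proof.
move=> n0 /andP[lt_nx lt_xn1].
have x0 : 0 < x by rewrite -(pmulr_rgt0 _ (ltr0Sn R n)) (lt_trans ltr01).
have [lt_n_inv lt_inv_n1] : n%:R < x^-1 /\ x^-1 < n.+1%:R.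
  by rewrite -div1r ltr_pdivlMr // ltr_pdivrMr.
have floorE : Num.floor x^-1 = n.
  by apply: floor_def; rewrite -PoszD addn1; apply/andP; split; [exact: ltW|].
have not_int : x^-1 \isn't a Num.int.
  by rewrite intrEfloor floorE; apply: contraTN lt_n_inv => /eqP <-; rewrite ltxx.
have ceilE : Num.ceil x^-1 = n.+1 by rewrite ceil_floor floorE not_int -PoszD addn1.
rewrite /d1 /T (gt_eqF x0) (negbTE not_int) floorE ceilE /=.
by case: (odd n).
Qed.

Definition Ik k : set R := `](2 * k%:R + 1)^-1, (2 * k%:R - 1)^-1[.
Definition Jk k : set R := Omega R `&` Ik k.

Lemma in_Ik k x : (0 < k)%N ->
  Ik k x <-> 1 < (2 * k%:R + 1) * x /\ (2 * k%:R - 1) * x < 1.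
Proof.
rewrite -(ler_nat R) => k1.
rewrite /Ik /= in_itv /= -[X in X < x]mulr1 -[X in x < X]mulr1.
by rewrite ltr_pdivrMl ?ltr_pdivlMl; lra.
Qed.

Lemma leq_of_Ik_bounds k l y :
  (2 * l%:R - 1) * y < 1 -> 1 < (2 * k%:R + 1) * y -> (l <= k)%N.
Proof.
move=> lty gty; rewrite -ltnS -(ltr_nat R) -natr1.
have := ler0n R k; have := ler0n R l; nra.
Qed.

Lemma Ik_inj k l x : (0 < k)%N -> (0 < l)%N -> Ik k x -> Ik l x -> k = l.
Proof.
move=> k0 l0 /(in_Ik _ _ k0)[gtk ltk] /(in_Ik _ _ l0)[gtl ltl].
apply/eqP; rewrite eqn_leq.
by rewrite (leq_of_Ik_bounds _ _ _ ltk gtl) (leq_of_Ik_bounds _ _ _ ltl gtk).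
Qed.

Lemma Ik_sub01 k : (0 < k)%N -> Ik k `<=` `]0, 1[.
Proof.
move=> k0 x /(in_Ik _ _ k0)[gtx ltx]; have k1 : 1 <= k%:R :> R by rewrite ler1n.
by rewrite /= in_itv /=; apply/andP; split; nra.
Qed.

Lemma Omega_Ik x : Omega R x -> exists2 k, (0 < k)%N & Ik k x.
Proof.
move=> [/andP[x0 x1] irr].
set m := Num.truncn x^-1.
have [le_m_inv lt_inv_m1] := andP (truncn_itv (ltW (etrans (invr_gt0 x) x0))).
have m0 : (0 < m)%N by rewrite truncn_gt0 invf_ge1 ?ltW.
have lt_mx : m%:R * x < 1.
  rewrite lt_neqAle -ler_pdivlMr // div1r le_m_inv andbT.
  apply/eqP => mx1; apply: irr; exists (m%:R^-1).
  have m_neq0 : m%:R != 0 :> R by rewrite pnatr_eq0 -lt0n.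
  by apply: (mulfI m_neq0); rewrite mx1 fmorphV /= ratr_nat divff.
have lt_xm1 : 1 < m.+1%:R * x by rewrite -ltr_pdivrMr // div1r.
exists (uphalf m); first by rewrite uphalf_gt0.
have [hm1 hm2] : (2 * uphalf m)%:R - 1 <= m%:R :> R /\
                 m.+1%:R <= (2 * uphalf m)%:R + 1 :> R.
  rewrite lerBlDr !natr1 !ler_nat mul2n uphalfK.
  by case: (odd m); rewrite ?add0n ?add1n ?leqnSn.
apply/in_Ik; first by rewrite uphalf_gt0.
rewrite -!natrM; split; nra.
Qed.

Lemma Jk_T_d1 k x : (0 < k)%N -> Jk k x ->
  d1 R x = (2 * k)%:Z /\ T R x = `|2 * k%:R * x - 1|.
Proof.
move=> k0 [[_ irr] /(in_Ik _ _ k0)[gtx ltx]].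
have k2_neq0 : 2 * k%:R != 0 :> R by rewrite mulf_neq0 // pnatr_eq0 -lt0n.
have [gt1|lt1] : 1 < 2 * k%:R * x \/ 2 * k%:R * x < 1.
  have [|//|eq1] := ltgtP (2 * k%:R * x) 1; [by right|by left|exfalso].
  apply: irr; exists (2 * k%:R)^-1.
  by apply: (mulfI k2_neq0); rewrite eq1 fmorphV rmorphM /= !rmorph_nat divff.
- have n_succ : ((2 * k).-1).+1 = (2 * k)%N by rewrite prednK // muln_gt0.
  have n_odd : odd (2 * k).-1 by rewrite -[odd _]negbK -oddS n_succ oddM.
  have n_pos : (0 < (2 * k).-1)%N by lia.
  have bounds : (2 * k).-1%:R * x < 1 < ((2 * k).-1).+1%:R * x.
    by rewrite n_succ -subn1 natrB ?muln_gt0 // !natrM ltx gt1.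
  have [-> ->] := @T_d1_between _ _ n_pos bounds.
  by rewrite n_odd n_succ natrM gtr0_norm ?subr_gt0.
- have n_pos : (0 < 2 * k)%N by rewrite muln_gt0.
  have bounds : (2 * k)%:R * x < 1 < (2 * k).+1%:R * x.
    by rewrite -natr1 !natrM lt1 gtx.
  have [-> ->] := @T_d1_between _ _ n_pos bounds.
  by rewrite oddM /= natrM ltr0_norm ?subr_lt0 ?opprB.
Qed.

Lemma d1_Omega_eq k x : (0 < k)%N -> Omega R x -> d1 R x = (2 * k)%:Z <-> Ik k x.
Proof.
move=> k0 Ox; have [l l0 Ilx] := Omega_Ik _ Ox.
have [-> _] := Jk_T_d1 _ _ l0 (conj Ox Ilx).
split => [[/eqP]|Ikx]; first by rewrite eqn_pmul2l // => /eqP <-.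
by rewrite (Ik_inj _ _ _ l0 k0 Ilx Ikx).
Qed.

Lemma irrational_Tk k x : (0 < k)%N ->
  Defs.irrational `|2 * k%:R * x - 1| <-> Defs.irrational x.
Proof.
move=> k0; rewrite irrational_normr.
have -> : 2 * k%:R * x - 1 = ratr (2 * k%:R) * x + ratr (-1).
  by rewrite rmorphM /= !rmorph_nat rmorphN rmorph1.
by apply/irrational_affine; rewrite mulf_neq0 // pnatr_eq0 -lt0n.
Qed.

Lemma T_Omega x : Omega R x -> Omega R (T R x).
Proof.
move=> Ox; have [k k0 Ikx] := Omega_Ik _ Ox.
have [_ ->] := Jk_T_d1 _ _ k0 (conj Ox Ikx).
move: Ox Ikx => [/andP[x0 x1] irr] /(in_Ik _ _ k0)[gtx ltx].
have k1 : 1 <= k%:R :> R by rewrite ler1n.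
have irrT := proj2 (irrational_Tk _ x k0) irr.
split=> //; apply/andP; split; last by rewrite ltr_norml; apply/andP; split; nra.
rewrite lt_neqAle normr_ge0 andbT eq_sym; apply/eqP => T0.
by apply: irrT; exists 0; rewrite T0 rmorph0.
Qed.

Lemma Jk_T_leq k l x : (0 < k)%N -> (0 < l)%N -> Jk k x -> Jk l (T R x) ->
  (k <= l)%N.
Proof.
move=> k0 l0 Jx [_ /(in_Ik _ _ l0)[gtT _]].
have [_ Tx] := Jk_T_d1 _ _ k0 Jx; rewrite {}Tx in gtT.
move: Jx => [_ /(in_Ik _ _ k0)[gtx ltx]]; have k1 : 1 <= k%:R :> R by rewrite ler1n.
apply: (leq_of_Ik_bounds _ _ `|2 * k%:R * x - 1|) => //.
by case: (lerP 0 (2 * k%:R * x - 1)) => h; [rewrite ger0_norm|rewrite ltr0_norm]; nra.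
Qed.

Lemma Omega_itvD : Omega R = `]0, 1[ `\` rational.
Proof.
apply/seteqP; split => x /=; rewrite in_itv /=.
  by move=> [x01 irr]; split => // -[q _ qx]; apply: irr; exists q.
by move=> [x01 nrat]; split => // -[q qx]; apply: nrat; exists q.
Qed.

Lemma measurable_Omega : measurable (Omega R).
Proof.
rewrite Omega_itvD; apply: measurableD; first exact: measurable_itv.
exact: measurable_rational.
Qed.

Lemma measurable_Jk k : measurable (Jk k).
Proof. by apply: measurableI; [exact: measurable_Omega|exact: measurable_itv]. Qed.

Definition init_prob k : R := 2 / ((2 * k%:R - 1) * (2 * k%:R + 1)).

Lemma init_prob_gt0 k : (0 < k)%N -> 0 < init_prob k.
Proof.
by rewrite -(ler_nat R) => k1; apply: divr_gt0 => //; apply: mulr_gt0; lra.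
Qed.

Lemma lebesgue_measure_Jk k : (0 < k)%N -> mu (Jk k) = (init_prob k)%:E.
Proof.
move=> k0; have k1 : 1 <= k%:R :> R by rewrite ler1n.
rewrite (_ : Jk k = Ik k `\` rational); last first.
  by rewrite /Jk Omega_itvD setIC setIDA (setIidl (Ik_sub01 _ k0)).
rewrite lebesgue_measure_setDrational; last exact: measurable_itv.
rewrite lebesgue_measure_itv /= lte_fin ifT; last by rewrite ltf_pV2 ?posrE; lra.
rewrite -EFinD /init_prob; congr (_%:E).
by field; apply/andP; split; apply/lt0r_neq0; lra.
Qed.

Lemma fin_num_lebesgue_Omega (A : set R) : measurable A -> A `<=` Omega R ->
  mu A \is a fin_num.
Proof.
move=> mA AO; rewrite ge0_fin_numE ?measure_ge0 //.
apply: (@le_lt_trans _ _ (mu `]0, 1[)).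
  by apply: le_measure; rewrite ?inE // => x /AO[]; rewrite /= in_itv.
by rewrite lebesgue_measure_itv /= lte_fin ltr01 ltry.
Qed.

(* Sum of 1/|slope| over the branches x |-> +-(2kx - 1) of T on [Ik k] that
   reach [Jk l]: both when k < l, only the increasing one when k = l. *)
Definition branch_weight k l : R := if k == l then (2 * k%:R)^-1 else k%:R^-1.

Lemma Jk_preimage_T k l (B : set R) : (0 < k)%N -> (k <= l)%N -> B `<=` Jk l ->
  Jk k `&` T R @^-1` B =
  (fun x => 2 * k%:R * x + -1) @^-1` B `|`
  (if (k < l)%N then (fun x => - (2 * k%:R) * x + 1) @^-1` B else set0).
Proof.
move=> k0 kl BJ; have l0 : (0 < l)%N := leq_trans k0 kl.
have [k1 kl'] : 1 <= k%:R :> R /\ k%:R <= l%:R :> R by rewrite ler1n ler_nat.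
have Jk_of_branch x : 1 < (2 * k%:R + 1) * x -> (2 * k%:R - 1) * x < 1 ->
    B `|2 * k%:R * x - 1| -> (Jk k `&` T R @^-1` B) x.
  move=> gtx ltx By; have [[_ irr] _] := BJ _ By.
  have Jx : Jk k x.
    split; last exact/in_Ik.
    by split; [apply/andP; split; nra|exact/(irrational_Tk _ _ k0)].
  by split => //=; have [_ ->] := Jk_T_d1 _ _ k0 Jx.
apply/seteqP; split => x.
- move=> [Jx /= BTx]; have [_ Tx] := Jk_T_d1 _ _ k0 Jx; rewrite Tx in BTx.
  have [y_ge0|y_lt0] := lerP 0 (2 * k%:R * x - 1); [left|right].
    by rewrite /= -(ger0_norm y_ge0).
  move: BTx; rewrite ltr0_norm // opprB => BTx.
  have [[_ /(in_Ik _ _ l0)[gty _]] [_ /(in_Ik _ _ k0)[gtx _]]] := conj (BJ _ BTx) Jx.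
  rewrite ifT /= ?mulNr 1?addrC //.
  by apply: (leq_of_Ik_bounds _ _ (1 - 2 * k%:R * x)) => //; rewrite -natr1; nra.
- case=> [/= By|]; first have [[/andP[y0 _] _] /(in_Ik _ _ l0)[gty lty]] := BJ _ By.
    by apply: Jk_of_branch; rewrite ?gtr0_norm //; nra.
  case: ifP => // lt_kl /=; rewrite mulNr addrC => By.
  have [[/andP[y0 _] _] /(in_Ik _ _ l0)[gty lty]] := BJ _ By.
  have kl2 : k%:R + 1 <= l%:R :> R by rewrite natr1 ler_nat.
  apply: Jk_of_branch; try nra.
  by rewrite ltr0_norm ?opprB //; nra.
Qed.

Lemma lebesgue_measure_Jk_preimage_T k l (B : set R) : (0 < k)%N -> (k <= l)%N ->
  measurable B -> B `<=` Jk l ->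
  mu (Jk k `&` T R @^-1` B) = ((branch_weight k l)%:E * mu B)%E.
Proof.
move=> k0 kl mB BJ; have k2 : 0 < 2 * k%:R :> R by rewrite mulr_gt0 ?ltr0n.
have muB_fin := fin_num_lebesgue_Omega _ mB (fun y By => (BJ y By).1).
rewrite (Jk_preimage_T _ _ _ k0 kl BJ) /branch_weight.
move: kl; rewrite leq_eqVlt => /orP[/eqP <-|lt_kl].
  by rewrite ltnn eqxx setU0 lebesgue_measure_preimage_affine ?gtr0_norm ?lt0r_neq0.
rewrite lt_kl (ltn_eqF lt_kl) (measureU mu); first last.
- apply/seteqP; split => // x [By1 By2].
  have [[[/andP[y0 _] _] _] [[/andP[y0' _] _] _]] := conj (BJ _ By1) (BJ _ By2).
  lra.
- exact: measurable_preimage_affine.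
- exact: measurable_preimage_affine.
rewrite /= !lebesgue_measure_preimage_affine ?oppr_eq0 ?lt0r_neq0 //.
rewrite normrN gtr0_norm //.
rewrite -(fineK muB_fin) -!EFinM -EFinD; congr (_%:E); field.
by rewrite pnatr_eq0 -lt0n.
Qed.

Lemma measurable_Omega_preimage_T (B : set R) : measurable B ->
  measurable (Omega R `&` T R @^-1` B).
Proof.
move=> mB; rewrite (_ : _ `&` _ = \bigcup_(k in [set k | (0 < k)%N])
    (Jk k `&` (fun x => `|2 * k%:R * x - 1|) @^-1` B)).
  apply: bigcup_measurable => k _; apply: measurableI; first exact: measurable_Jk.
  rewrite -[_ @^-1` _]setTI; apply: measurableT_comp => //.
  exact: measurable_fun_affine.
apply/seteqP; split => [x [Ox BTx]|x [k /= k0 [Jx BTx]]].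
  have [k k0 Ikx] := Omega_Ik _ Ox; exists k => //.
  by have [_ Tx] := Jk_T_d1 _ _ k0 (conj Ox Ikx); rewrite /= -Tx.
by split; [exact: Jx.1|have [_ ->] := Jk_T_d1 _ _ k0 Jx].
Qed.

Lemma iter_T_Omega n x : Omega R x -> Omega R (iter n (T R) x).
Proof. by move=> Ox; elim: n => //= n IH; exact: T_Omega. Qed.

Lemma measurable_dEvent1 (i : int) : measurable (dEvent R 1 i).
Proof.
rewrite (_ : dEvent R 1 i = \bigcup_(k in [set k | (0 < k)%N /\ (2 * k)%:Z = i]) Jk k).
  by apply: bigcup_measurable => k _; exact: measurable_Jk.
apply/seteqP; split => [x [Ox <-]|x [k [k0 <-] [Ox Ikx]]]; last first.
  by split => //; exact/(d1_Omega_eq _ _ k0 Ox).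
have [k k0 Ikx] := Omega_Ik _ Ox; exists k => //.
by split => //; exact/esym/(d1_Omega_eq _ _ k0 Ox).
Qed.

(* [has_density n E w]: the image under [T^n] of Lebesgue measure restricted to
   [E] has the constant density [w k] on each [Jk k]. *)
Definition has_density n (E : set R) (w : nat -> R) :=
  [/\ E `<=` Omega R,
      forall B, measurable B -> measurable (E `&` iter n (T R) @^-1` B) &
      forall k B, (0 < k)%N -> measurable B -> B `<=` Jk k ->
        mu (E `&` iter n (T R) @^-1` B) = ((w k)%:E * mu B)%E].

Lemma has_density_measurable n E w : has_density n E w -> measurable E.
Proof.
by case=> _ mE _; rewrite -[E]setIT -(preimage_setT (iter n (T R))); exact: mE.
Qed.

Lemma has_density_Omega0 : has_density 0 (Omega R) (fun=> 1).
Proof.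
split=> // [B mB|k B k0 mB BJ].
  by apply: measurableI => //; exact: measurable_Omega.
by rewrite mul1e (setIidr (fun y By => (BJ y By).1)).
Qed.

Lemma has_density_restrict n E w (i : int) : has_density n E w ->
  has_density n (E `&` [set x | d1 R (iter n (T R) x) = i])
    (fun k => if (2 * k)%:Z == i then w k else 0).
Proof.
move=> [EO mE muE].
have restrictE B :
    E `&` [set x | d1 R (iter n (T R) x) = i] `&` iter n (T R) @^-1` B =
    E `&` iter n (T R) @^-1` (B `&` dEvent R 1 i).
  apply/seteqP; split => [x [[Ex dx] Bx]|x [Ex [Bx [_ dx]]]] //.
  by split => //; split => //; split => //; exact/iter_T_Omega/EO.
split=> [x [/EO]//|B mB|k B k0 mB BJ]; rewrite restrictE.
  by apply: mE; apply: measurableI => //; exact: measurable_dEvent1.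
have dB y : B y -> d1 R y = (2 * k)%:Z.
  by move=> /BJ[Oy Iky]; exact/(d1_Omega_eq _ _ k0 Oy).
case: eqP => [<-|ne_i].
  rewrite -muE // (_ : B `&` _ = B) //; apply/seteqP; split => [y []//|y By].
  by split => //; split; [exact: (BJ _ By).1|exact: dB].
rewrite mul0e (_ : B `&` _ = set0) ?preimage_set0 ?setI0 ?measure0 //.
apply/seteqP; split => // y [By [_ dy]].
by apply: ne_i; rewrite -dy; exact/esym/dB.
Qed.

Definition push_density (w : nat -> R) l : R :=
  \sum_(k < l.+1 | (0 < k)%N) w k * branch_weight k l.

Lemma has_density_push n E w :
  has_density n E w -> has_density n.+1 E (push_density w).
Proof.
move=> [EO mE muE].
have iterSE B : E `&` iter n.+1 (T R) @^-1` B =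
    E `&` iter n (T R) @^-1` (Omega R `&` T R @^-1` B).
  apply/seteqP; split => [x [Ex Bx]|x [Ex [_ Bx]]] //.
  by split => //; split => //; exact/iter_T_Omega/EO.
split=> // [B mB|l B l0 mB BJ]; rewrite iterSE //.
  exact: mE (measurable_Omega_preimage_T _ mB).
pose F k := E `&` iter n (T R) @^-1` (Jk k `&` T R @^-1` B).
have mJT k : measurable (Jk k `&` T R @^-1` B).
  rewrite -[Jk k](setIidl (@subIsetl _ (Omega R) (Ik k))) -setIA.
  by apply: measurableI; [exact: measurable_Jk|exact: measurable_Omega_preimage_T].
have muB_fin := fin_num_lebesgue_Omega _ mB (fun y By => (BJ y By).1).
rewrite (_ : _ `&` _ = \big[setU/set0]_(k < l.+1 | (0 < k)%N) F k).
  rewrite measure_bigsetU_ord_cond; first last.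
  - move=> i j i0 j0 [x [[_ [[_ Iix] _]] [_ [[_ Ijx] _]]]].
    exact/val_inj/(Ik_inj _ _ _ i0 j0 Iix Ijx).
  - by move=> k _; apply: mE.
  rewrite -(fineK muB_fin) -EFinM /push_density big_distrl -sumEFin.
  apply: eq_bigr => k k0; rewrite [LHS](muE k _ k0 (mJT k)) => [|x []//].
  rewrite (lebesgue_measure_Jk_preimage_T _ _ _ k0 (ltn_ord k)) //.
  by rewrite -[in LHS](fineK muB_fin) muleA -!EFinM.
rewrite big_mkcond -(bigcup_mkord _ (fun k => if (0 < k)%N then F k else set0)).
apply/seteqP; split.
- move=> x [Ex [Oy BTy]]; have [k k0 Iky] := Omega_Ik _ Oy.
  have kl : (k < l.+1)%N.
    by rewrite ltnS (Jk_T_leq _ _ _ k0 l0 (conj Oy Iky) (BJ _ BTy)).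
  by exists (Ordinal kl) => //=; rewrite k0.
- by move=> x [k _ /=]; case: ifP => // k0 [Ex [[Oy _] BTy]].
Qed.

Lemma has_density_Omega n : exists w, has_density n (Omega R) w.
Proof.
elim: n => [|n [w dw]]; first by exists (fun=> 1); exact: has_density_Omega0.
by exists (push_density w); exact: has_density_push.
Qed.

Lemma d1_Omega_even x : Omega R x -> exists2 k, (0 < k)%N & d1 R x = (2 * k)%:Z.
Proof.
move=> Ox; have [k k0 Ikx] := Omega_Ik _ Ox.
by exists k => //; exact/(d1_Omega_eq _ _ k0).
Qed.

Lemma has_density_concentrated n E w k0 : has_density n E w -> (0 < k0)%N ->
  E `<=` [set x | d1 R (iter n (T R) x) = (2 * k0)%:Z] ->
  mu E = (w k0 * init_prob k0)%:E /\ forall k, (0 < k)%N -> k != k0 -> w k = 0.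
Proof.
move=> [EO _ muE] k0_gt0 Ed.
have EJE k : (0 < k)%N ->
    E `&` iter n (T R) @^-1` Jk k = if k == k0 then E else set0.
  move=> k_gt0; apply/seteqP; split => [x [Ex [Oy Iky]]|x].
    have := Ed _ Ex; rewrite /= (proj2 (d1_Omega_eq _ _ k_gt0 Oy) Iky) => -[/eqP].
    by rewrite eqn_pmul2l // => ->.
  case: eqP => [-> Ex|//]; have Oy := iter_T_Omega n _ (EO _ Ex).
  by split => //; split => //; exact/(d1_Omega_eq _ _ k0_gt0 Oy)/Ed.
have muEJ k : (0 < k)%N ->
    mu (E `&` iter n (T R) @^-1` Jk k) = (w k * init_prob k)%:E.
  by move=> k_gt0; rewrite (muE k) ?lebesgue_measure_Jk //; exact: measurable_Jk.
split; first by rewrite -muEJ // EJE // eqxx.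
move=> k k_gt0 ne_k; have := muEJ k k_gt0; rewrite EJE // (negbTE ne_k) measure0.
move=> /esym/eqP; rewrite eqe mulf_eq0 (gt_eqF (init_prob_gt0 _ k_gt0)) orbF.
by move/eqP.
Qed.

Lemma push_density_concentrated w k0 l : (0 < k0)%N ->
  (forall k, (0 < k)%N -> k != k0 -> w k = 0) ->
  push_density w l = if (k0 <= l)%N then w k0 * branch_weight k0 l else 0.
Proof.
move=> k0_gt0 w0; rewrite /push_density; case: ifP => kl.
  rewrite (bigD1 (Ordinal (kl : (k0 < l.+1)%N))) //= big1 ?addr0 //.
  move=> k /andP[k_gt0 ne_k].
  by rewrite w0 ?mul0r //; apply: contra ne_k => /eqP e; apply/eqP/val_inj.
rewrite big1 // => k k_gt0; rewrite w0 ?mul0r //.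
by apply: contraFneq kl => <-; rewrite -ltnS.
Qed.

(* Given d_n = 2k, the density of T^n is concentrated on [Jk k], so d_(n+1) = 2l
   has probability w_k * branch_weight k l * L(Jk l) / (w_k * L(Jk k)). *)
Definition transition (i j : int) : R :=
  let k := (absz i)./2 in
  if j is Posz b then
    if ~~ odd b && (k <= b./2)%N then branch_weight k b./2 * init_prob b./2 / init_prob k
    else 0
  else 0.

Lemma transition_even k l : transition (2 * k)%:Z (2 * l)%:Z =
  if (k <= l)%N then branch_weight k l * init_prob l / init_prob k else 0.
Proof. by rewrite /transition /= oddM /= !mul2n !doubleK. Qed.

Lemma transition_not_even k (j : int) : (0 < k)%N ->
  ~ (exists2 l, (0 < l)%N & j = (2 * l)%:Z) -> transition (2 * k)%:Z j = 0.
Proof.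
move=> k0 not_even; case: j not_even => // b not_even /=.
rewrite mul2n doubleK; case: ifP => // /andP[b_even kb]; exfalso.
apply: not_even; exists b./2; first exact: leq_trans kb.
by rewrite mul2n -[in LHS](odd_double_half b) (negbTE b_even).
Qed.

Lemma condProb_has_density p E w k0 (j : int) :
  has_density p E w -> (0 < k0)%N ->
  E `<=` [set x | d1 R (iter p (T R) x) = (2 * k0)%:Z] -> 0 < Prob R E ->
  condProb R (dEvent R p.+2 j) E = transition (2 * k0)%:Z j.
Proof.
move=> dE k0_gt0 Ed PE; have [EO _ _] := dE.
have [muE w0] := has_density_concentrated _ _ _ _ dE k0_gt0 Ed.
have wk0_neq0 : w k0 != 0.
  by apply: contraTneq PE => wk0; rewrite /Prob muE wk0 mul0r ltxx.
rewrite /condProb (_ : dEvent R p.+2 j `&` E =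
    E `&` [set x | d1 R (iter p.+1 (T R) x) = j]); last first.
  apply/seteqP; split => [x [[_ dx] Ex]|x [Ex dx]] //.
  by split => //; split => //; exact: EO.
have [[l l0 ->]|not_even] := pselect (exists2 l, (0 < l)%N & j = (2 * l)%:Z).
  have dE' := has_density_restrict _ _ _ (2 * l)%:Z (has_density_push _ _ _ dE).
  have [muE' _] := has_density_concentrated _ _ _ _ dE' l0 (fun x Ex => Ex.2).
  rewrite /Prob muE muE' eqxx (push_density_concentrated _ _ _ k0_gt0 w0).
  rewrite transition_even /=.
  case: ifP => _; rewrite ?mul0r ?mulr0 ?mul0r //.
  by field; apply/andP; split => //; exact/lt0r_neq0/init_prob_gt0.
rewrite transition_not_even // (_ : _ `&` _ = set0) /Prob ?measure0 ?mul0r //.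
apply/seteqP; split => // x [Ex dx]; apply: not_even.
have [l l0 dl] := d1_Omega_even _ (iter_T_Omega p.+1 _ (EO _ Ex)).
by exists l; rewrite -?dx.
Qed.

Lemma even_of_Prob_gt0 p E w (i : int) : has_density p E w ->
  E `<=` [set x | d1 R (iter p (T R) x) = i] -> 0 < Prob R E ->
  exists2 k, (0 < k)%N & i = (2 * k)%:Z.
Proof.
move=> [EO _ _] Ed PE; have [x Ex] : E !=set0.
  by apply/set0P; apply: contraTneq PE => ->; rewrite /Prob measure0 ltxx.
have [k k0 dk] := d1_Omega_even _ (iter_T_Omega p _ (EO _ Ex)).
by exists k; rewrite // -dk Ed.
Qed.

Lemma has_density_dEvent n (i : int) : exists w, has_density n (dEvent R n.+1 i) w.
Proof.
have [w dw] := has_density_Omega n.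
by eexists; exact: has_density_restrict _ _ _ i dw.
Qed.

Lemma has_density_cylinder n a : exists w, has_density n (cylinder R n.+1 a) w.
Proof.
elim: n => [|n [w dw]].
  have [w dw] := has_density_dEvent 0 (a 1%N); exists w.
  rewrite (_ : cylinder R 1 a = dEvent R 1 (a 1%N)) //.
  apply/seteqP; split => x [Ox dx]; split => //; first exact: dx.
  move=> i /andP[i1 i_le1]; rewrite (_ : i = 1%N) //.
  by apply/eqP; rewrite eqn_leq i_le1.
eexists; rewrite (_ : cylinder R n.+2 a = cylinder R n.+1 a `&`
    [set x | d1 R (iter n.+1 (T R) x) = a n.+2]).
  exact: has_density_restrict _ _ _ _ (has_density_push _ _ _ dw).
apply/seteqP; split => [x [Ox dx]|x [[Ox dx] dSx]].
  split; first by split => // i /andP[i1 i_le]; apply: dx; rewrite i1 leqW.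
  by rewrite /= -(dx n.+2) ?leqnn.
split => // i /andP[i1]; rewrite leq_eqVlt => /orP[/eqP -> //|i_lt].
by apply: dx; rewrite i1.
Qed.

Lemma measurable_dEvent n (i : int) : measurable (dEvent R n i).
Proof.
have [w dw] := has_density_dEvent n.-1 i.
by case: n dw => [|n] /has_density_measurable.
Qed.

Lemma lebesgue_measure_dEvent1 k : (0 < k)%N ->
  mu (dEvent R 1 (2 * k)%:Z) = (init_prob k)%:E.
Proof.
move=> k0; rewrite -lebesgue_measure_Jk //; congr (mu _).
by apply/seteqP; split => x [Ox dx]; split => //; apply/(d1_Omega_eq _ _ k0 Ox).
Qed.

Lemma condProb_dEvent n (i j : int) : (1 <= n)%N -> 0 < Prob R (dEvent R n i) ->
  condProb R (dEvent R n.+1 j) (dEvent R n i) = transition i j.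
Proof.
case: n => [//|p] _ PE; have [w dw] := has_density_dEvent p i.
have [k k0 ik] := even_of_Prob_gt0 _ _ _ i dw (fun x Ex => Ex.2) PE; subst i.
exact: condProb_has_density _ _ _ _ _ dw k0 (fun x Ex => Ex.2) _.
Qed.

Lemma condProb_cylinder n a : (1 <= n)%N -> 0 < Prob R (cylinder R n a) ->
  condProb R (dEvent R n.+1 (a n.+1)) (cylinder R n a) = transition (a n) (a n.+1).
Proof.
case: n => [//|p] _ PC; have [w dw] := has_density_cylinder p a.
have Cd : cylinder R p.+1 a `<=` [set x | d1 R (iter p (T R) x) = a p.+1].
  by move=> x [_ dx]; rewrite /= -(dx p.+1) ?leqnn.
have [k k0 ak] := even_of_Prob_gt0 _ _ _ _ dw Cd PC.
by rewrite ak in Cd *; exact: condProb_has_density _ _ _ _ _ dw k0 Cd _.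
Qed.

Lemma Prob_cylinder_le n a : (1 <= n)%N ->
  Prob R (cylinder R n a) <= Prob R (dEvent R n (a n)).
Proof.
case: n => [//|p] _.
have [w dw] := has_density_dEvent p (a p.+1); have [EO _ _] := dw.
have [v /has_density_measurable mC] := has_density_cylinder p a.
have mE := measurable_dEvent p.+1 (a p.+1).
have CE : cylinder R p.+1 a `<=` dEvent R p.+1 (a p.+1).
  by move=> x [Ox dx]; split => //; rewrite -(dx p.+1) ?leqnn.
have muE_fin := fin_num_lebesgue_Omega _ mE EO.
have muC_fin := fin_num_lebesgue_Omega _ mC (subset_trans CE EO).
by apply: fine_le => //; apply: le_measure; rewrite ?inE.
Qed.

Lemma transition_formula k l : (0 < k)%N -> (k <= l)%N ->
  transition (2 * k)%:Z (2 * l)%:Z =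
  if l == k then (2 * k%:R)^-1
  else (2 * k%:R - 1) * (2 * k%:R + 1) /
       (k%:R * (2 * l%:R - 1) * (2 * l%:R + 1)).
Proof.
move=> k0 kl; have [k1 l1] : 1 <= k%:R :> R /\ 1 <= l%:R :> R.
  by rewrite !ler1n (leq_trans k0 kl).
rewrite transition_even kl /branch_weight /init_prob eq_sym.
by case: eqP => [->|_]; field; rewrite !lt0r_neq0 //; lra.
Qed.
End signed_engel.

Theorem proposition2p3 (R : realType) :
  (* the digits are random variables: the events {d_n = m} are Borel *)
  (forall (n : nat) (m : int), measurable (dEvent R n m))
  /\
  (* initial distribution *)
  (forall k : nat, (0 < k)%N ->
     (@lebesgue_measure R (dEvent R 1 (2 * k)%:Z) =
      (2 / ((2 * k%:R - 1) * (2 * k%:R + 1)))%:E)%E)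
  /\
  (* Markov property *)
  (forall (n : nat) (a : nat -> int), (1 <= n)%N ->
     0 < Prob R (cylinder R n a) ->
     condProb R (dEvent R n.+1 (a n.+1)) (cylinder R n a) =
     condProb R (dEvent R n.+1 (a n.+1)) (dEvent R n (a n)))
  /\
  (* time-homogeneity *)
  (forall (n m : nat) (i j : int), (1 <= n)%N -> (1 <= m)%N ->
     0 < Prob R (dEvent R n i) -> 0 < Prob R (dEvent R m i) ->
     condProb R (dEvent R n.+1 j) (dEvent R n i) =
     condProb R (dEvent R m.+1 j) (dEvent R m i))
  /\
  (* one-step transition probabilities *)
  (forall (n k l : nat), (1 <= n)%N -> (0 < k)%N -> (k <= l)%N ->
     0 < Prob R (dEvent R n (2 * k)%:Z) ->
     condProb R (dEvent R n.+1 (2 * l)%:Z) (dEvent R n (2 * k)%:Z) =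
     (if l == k then (2 * k%:R)^-1
      else (2 * k%:R - 1) * (2 * k%:R + 1) /
           (k%:R * (2 * l%:R - 1) * (2 * l%:R + 1)) : R)).
Proof.
split; first exact: measurable_dEvent.
split; first exact: lebesgue_measure_dEvent1.
split.
  move=> n a n1 PC; rewrite condProb_cylinder // condProb_dEvent //.
  exact: lt_le_trans PC (Prob_cylinder_le _ _ _ n1).
split; first by move=> n m i j n1 m1 Pn Pm; rewrite !condProb_dEvent.
by move=> n k l n1 k0 kl Pn; rewrite condProb_dEvent // transition_formula.
Qed.
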